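(* Let $\mathcal{D}=(\mathcal{P},\mathcal{L})$ be a $(G,2)$-point-transitive linear space with $|\mathcal{P}|\ge4$, where $G\le\mathrm{Aut}(\mathcal{D})$. Let $(\sigma,L)$ be an antiflag of $\mathcal{D}$ such that $\Omega=(\sigma,\mathcal{P}\setminus L)^G$ is a feasible $G$-orbit on the set of flags of the complement $\overline{\mathcal{D}}$. Then either $G_L$ is 2-transitive on $\mathcal{P}\setminus L$, or $G_L\le G_\sigma$ and $|L|(|L|-1)$ divides $|\mathcal{P}|-1$. Moreover, if $L=\{\alpha,\beta\}$, then either $|\mathcal{P}|=4$ and $G=A_4$, or $G_{\alpha,\beta}$ is transitive on $\mathcal{P}\setminus\{\alpha,\beta\}$, or $|\mathcal{P}|$ is odd and $G_{\alpha,\beta}\le G_\sigma$ is $\tfrac12$-transitive on $\mathcal{P}\setminus\{\alpha,\beta,\sigma\}$.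
   Context: All groups are finite. A linear space is an incidence structure of points and lines (lines identified with point sets) in which each line has at least two points and any two points lie on exactly one line; $(G,2)$-point-transitive means $G$ acts as automorphisms, 2-transitively on points. An antiflag is a pair $(\sigma,L)$ with $L$ a line and $\sigma\notin L$. The complement $\overline{\mathcal{D}}$ has point set $\mathcal{P}$ and blocks $\mathcal{P}\setminus L$, $L\in\mathcal{L}$; its flags are pairs (point, block containing it). For a $G$-orbit $\Omega$ on flags and a point $\sigma$, $\Omega(\sigma)$ is the set of flags of $\Omega$ with point-entry $\sigma$; $\Omega$ is feasible if $|\Omega(\sigma)|\ge2$ and, for a flag $(\sigma,M)\in\Omega$, the setwise stabilizer $G_{\sigma,M}$ of $M$ in $G_\sigma$ is transitive on $M\setminus\{\sigma\}$. $G_L$ is the setwise stabilizer of $L$, $G_{\alpha,\beta}=G_\alpha\cap G_\beta$. A group is $\tfrac12$-transitive on a set if all its orbits on that set have the same length. *)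

From mathcomp Require Import all_boot all_fingroup all_solvable.
Open Scope group_scope. Open Scope nat_scope.
Set Implicit Arguments. Unset Strict Implicit. Unset Printing Implicit Defensive.

(* Points: a finite type T (the point set P is [set: T]);
   lines: a set of subsets of T;  G : a group of permutations of T,
   acting by the natural permutation action 'P. *)

Definition linear_space (T : finType) (lines : {set {set T}}) : Prop :=
  (forall L, L \in lines -> 1 < #|L|) /\
  (forall x y : T, x != y -> #|[set L in lines | (x \in L) && (y \in L)]| = 1).

Definition automorphisms (T : finType) (lines : {set {set T}})
    (G : {set {perm T}}) : Prop :=
  [acts G, on lines | 'P^*].

(* The G-orbit of the flag (s, M) of the complement design (a flag is a
   pair (point, block)). *)
Definition flag_orbit (T : finType) (G : {set {perm T}}) (s : T) (M : {set T})
  : {set T * {set T}} :=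
  [set (aperm s g, setact 'P M g) | g in G].

Definition flags_at (T : finType) (Om : {set T * {set T}}) (t : T)
  : {set T * {set T}} :=
  [set f in Om | f.1 == t].

Definition feasible (T : finType) (G : {set {perm T}}) (Om : {set T * {set T}})
  : Prop :=
  (forall t : T, 2 <= #|flags_at Om t|) /\
  (forall f, f \in Om ->
     [transitive 'C_G[f.1 | 'P] :&: 'N(f.2 | 'P), on f.2 :\ f.1 | 'P]).

Definition half_transitive (T : finType) (H : {set {perm T}}) (S : {set T})
  : Prop :=
  [acts H, on S | 'P] /\
  (forall x y, x \in S -> y \in S -> #|orbit 'P H x| = #|orbit 'P H y|).

From mathcomp Require Import all_boot all_fingroup all_solvable zify.
Open Scope group_scope. Open Scope nat_scope.
Set Implicit Arguments. Unset Strict Implicit. Unset Printing Implicit Defensive.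

(* Write v = |P|, k = |L| and N for the stabilizer of the line L.
   Feasibility says that N_s is transitive on the points off L other than s.
   If some element of N moves s, N is therefore 2-transitive off L; otherwise
   N <= G_s, and comparing |N| = k(k-1)|G_ab| (N is 2-transitive on L) with
   |G_s| = (v-1)|G_ab| gives k(k-1) | v-1, which for k = 2 makes v odd.
   For L = {a, b}, the two-point stabilizer H = G_ab is normalized by N.  When
   N <= G_s, N_s permutes the H-orbits off {a, b, s} transitively, so they all
   have the same length.  When N is 2-transitive off L, either H moves some
   point there, and then conjugating by N makes H transitive, or H = 1; then
   N_a = 1 gives |N| <= 2, while |N| >= (v-2)(v-3), so v = 4 and |G| = 12.
   The point stabilizers of G then have order 3, so consist of even
   permutations, and two of them already give 9 elements of G meet A4. *)

Lemma dvdn_eq_gt_half d n : d %| n -> 0 < n -> n < d.*2 -> d = n.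
Proof.
case/dvdnP=> k ->; rewrite muln_gt0 -mul2n => /andP[k_gt0 d_gt0].
by rewrite ltn_pmul2r //; case: k k_gt0 => [|[|]] // _ _; rewrite mul1n.
Qed.

Section TransitiveActions.

Variables (gT : finGroupType) (sT : finType) (to : {action gT &-> sT}).
Implicit Types (A H K : {group gT}) (S : {set sT}).

Lemma trans_ntransitive1 A S :
  [transitive A, on S | to] -> [transitive^1 A, on S | to].
Proof.
have dtuple1 x : ([tuple x] \in 1.-dtuple(S)) = (x \in S).
  by rewrite dtuple_on_add !inE memtE subset_all andbT.
case/imsetP=> x Sx defS; apply/imsetP; exists [tuple x]; first by rewrite dtuple1.
apply/setP=> t; case/tupleP: t => y t0; rewrite (tuple0 t0) dtuple1 defS.
by apply/imsetP/imsetP=> [[a ? ->]|[a ? [->]]]; exists a => //; apply: val_inj.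
Qed.

Lemma ntransitive2P A S x1 x2 y1 y2 :
    [transitive^2 A, on S | to] ->
    x1 \in S -> x2 \in S -> y1 \in S -> y2 \in S -> x1 != x2 -> y1 != y2 ->
  exists2 a, a \in A & to x1 a = y1 /\ to x2 a = y2.
Proof.
move=> tr2A Sx1 Sx2 Sy1 Sy2 nx ny.
have dtuple2 z1 z2 : z1 \in S -> z2 \in S -> z1 != z2 -> [tuple z1; z2] \in 2.-dtuple(S).
  by move=> Sz1 Sz2 nz; rewrite !inE !memtE !subset_all /= !mem_seq1 !andbT nz Sz1 Sz2.
have [a Aa /(congr1 val) [-> ->]] :=
  atransP2 tr2A (dtuple2 _ _ Sx1 Sx2 nx) (dtuple2 _ _ Sy1 Sy2 ny).
by exists a.
Qed.

Lemma card_atrans_stab A S x :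
  [transitive A, on S | to] -> x \in S -> #|S| * #|'C_A[x | to]| = #|A|.
Proof. by move=> trA Sx; rewrite -(atransP trA x Sx) card_orbit_stab. Qed.

Lemma card_orbit2_stab A x y :
  #|orbit to A x| * #|orbit to 'C_A[x | to] y| * #|'C_A[x | to] :&: 'C_A[y | to]|
    = #|A|.
Proof. by rewrite setIACA setIid setIA -mulnA !card_orbit_stab. Qed.

Lemma card_ntransitive2 A S x y :
    [transitive^2 A, on S | to] -> x \in S -> y \in S -> x != y ->
  #|S| * (#|S| - 1) * #|'C_A[x | to] :&: 'C_A[y | to]| = #|A|.
Proof.
move=> tr2A Sx Sy nxy.
have trA := ntransitive1 (ltn0Sn 1) tr2A.
have trAx := ntransitive1 (ltn0Sn 0) (stab_ntransitive (ltn0Sn 0) Sx tr2A).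
have Sxy : y \in S :\ x by rewrite !inE eq_sym nxy.
rewrite -(card_orbit2_stab A x y) (atransP trA x Sx) (atransP trAx y Sxy).
by rewrite (cardsD1 x S) Sx add1n subn1.
Qed.

Lemma stab_trans_ntransitive2 A S x :
    [acts A, on S | to] -> x \in S -> [transitive 'C_A[x | to], on S :\ x | to] ->
    ~~ (A \subset 'C[x | to]) ->
  [transitive^2 A, on S | to].
Proof.
move=> actsA Sx trAx /subsetPn[a Aa xa].
have trA : [transitive A, on S | to].
  apply/imsetP; exists x => //; apply/eqP; rewrite eqEsubset acts_sub_orbit // Sx andbT.
  apply/subsetP=> z Sz; have [-> | zx] := eqVneq z x; first exact: orbit_refl.
  have Sxa : to x a \in S :\ x.
    by rewrite !inE (actsP actsA) // Sx andbT; apply: contra xa => /eqP /astab1P.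
  have Szx : z \in S :\ x by rewrite !inE zx.
  have [c /setIP[Ac _] ->] := atransP2 trAx Sxa Szx.
  by rewrite -actM mem_orbit ?groupM.
by apply: stab_ntransitiveI Sx trA _; apply: trans_ntransitive1.
Qed.

Lemma card_orbit_norm H a x :
  a \in 'N(H) -> #|orbit to H (to x a)| = #|orbit to H x|.
Proof.
by move=> nHa; rewrite !card_orbit astab1_act -{1 2}(normP nHa) -conjIg indexJg.
Qed.

Lemma card_orbit_trans_norm K H S x y :
    [transitive K, on S | to] -> K \subset 'N(H) -> x \in S -> y \in S ->
  #|orbit to H x| = #|orbit to H y|.
Proof.
move=> trK nHK Sx Sy; have [k Kk ->] := atransP2 trK Sx Sy.
by rewrite card_orbit_norm // (subsetP nHK).
Qed.

Lemma trans_norm_ntransitive2 K H S x y :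
    [transitive^2 K, on S | to] -> K \subset 'N(H) -> [acts H, on S | to] ->
    x \in S -> y \in S -> x != y -> y \in orbit to H x ->
  [transitive H, on S | to].
Proof.
move=> tr2K nHK actsH Sx Sy nxy Hxy; apply/imsetP; exists x => //.
apply/eqP; rewrite eqEsubset acts_sub_orbit // Sx andbT.
apply/subsetP=> z Sz; have [-> | zx] := eqVneq z x; first exact: orbit_refl.
have xz : x != z by rewrite eq_sym.
have [k Kk [kx ky]] := ntransitive2P tr2K Sx Sy Sx Sz nxy xz.
by move: Hxy; rewrite -(orbit_conjsg _ _ k) (normP (subsetP nHK k Kk)) kx ky.
Qed.

End TransitiveActions.

Lemma odd_permX (T : finType) (g : {perm T}) n :
  odd_perm (g ^+ n) = odd n && odd_perm g.
Proof.
elim: n => [|n IHn]; first by rewrite expg0 odd_perm1.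
by rewrite expgS odd_permM IHn /=; case: (odd n); case: (odd_perm g).
Qed.

Lemma sharply_ntransitive2_Alt4 (T : finType) (G : {group {perm T}}) a b :
    #|T| = 4 -> [transitive^2 G, on [set: T] | 'P] -> a != b ->
    'C_G[a | 'P] :&: 'C_G[b | 'P] = 1%g ->
  G :=: Alt T.
Proof.
move=> cardT tr2G nab Gab1.
have cardG : #|G| = 12.
  by rewrite -(card_ntransitive2 tr2G _ _ nab) ?inE // Gab1 cards1 cardsT cardT.
have cardGz z : #|'C_G[z | 'P]| = 3.
  apply/eqP; rewrite -(eqn_pmul2l (_ : 0 < 4)) // -{1}cardT -cardsT.
  by rewrite card_atrans_stab ?inE ?cardG // (ntransitive1 (ltn0Sn 1) tr2G).
have GzAlt z : 'C_G[z | 'P] \subset Alt T.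
  apply/subsetP=> g Gzg; rewrite Alt_even.
  have := congr1 (@odd_perm T) (expg_cardG Gzg).
  by rewrite cardGz odd_permX odd_perm1 /= => ->.
have cardGAlt : #|G :&: Alt T| = 12.
  have GabAlt : ('C_G[a | 'P] * 'C_G[b | 'P])%g \subset G :&: Alt T.
    by apply: mul_subG; rewrite subsetI GzAlt subsetIl.
  have card9 : #|('C_G[a | 'P] * 'C_G[b | 'P])%g| = 9.
    by have := mul_cardG 'C_G[a | 'P] 'C_G[b | 'P]; rewrite !cardGz Gab1 cards1 muln1.
  apply: (dvdn_eq_gt_half _ (isT : 0 < 12)); first by rewrite -cardG cardSg ?subsetIl.
  by rewrite -mul2n (@leq_trans (2 * 9)) // leq_mul2l -card9 subset_leq_card.
have sGAlt : G \subset Alt T.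
  by apply/setIidPl/eqP; rewrite eqEcard subsetIl cardGAlt cardG.
apply/eqP; rewrite eqEcard sGAlt cardG -(leq_pmul2l (_ : 0 < 2)) //.
by rewrite card_Alt cardT.
Qed.

Section PointPair.

Variables (T : finType) (G : {group {perm T}}) (a b : T).
Hypothesis nab : a != b.

Local Notation L := [set a; b].
Local Notation H := ('C_G[a | 'P] :&: 'C_G[b | 'P]).
Local Notation N := 'N_G(L | 'P).

Lemma pair_stabE : H = 'C_G(L | 'P).
Proof. by rewrite astabU setIACA setIid. Qed.

Lemma pair_stab_sub_norm : H \subset N.
Proof. by rewrite pair_stabE setIS ?astab_sub. Qed.

Lemma norm_pair_stab : N \subset 'N(H).
Proof.
rewrite pair_stabE normsI //; first exact: subset_trans (subsetIl _ _) (normG G).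
exact: subset_trans (subsetIr _ _) (astab_norm _ _).
Qed.

Lemma acts_pair_stab_compl : [acts H, on ~: L | 'P].
Proof. by rewrite astabsC (subset_trans pair_stab_sub_norm) ?subsetIr. Qed.

Lemma norm_pair_astab1 : 'C_N[a | 'P] \subset H.
Proof.
apply/subsetP=> g /setIP[/setIP[Gg nLg] /astab1P ga].
have gb : g b = b.
  have := astabs_act b nLg; rewrite !inE eqxx orbT /= -{1}ga (inj_eq perm_inj).
  by rewrite eq_sym (negPf nab) => /eqP.
by apply/setIP; split; apply/setIP; split=> //; apply/astab1P.
Qed.

Lemma card_norm_pair_trivial : H = 1%g -> #|N| <= 2.
Proof.
move=> H1; rewrite -(card_orbit_stab 'P N a) -(muln1 2).
have orbit_sub : orbit 'P N a \subset L by rewrite acts_sub_orbit ?subsetIr // !inE eqxx.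
have stab_sub : 'C_N[a | 'P] \subset [1 {perm T}] by rewrite -H1 norm_pair_astab1.
apply: leq_mul; first by rewrite (leq_trans (subset_leq_card orbit_sub)) ?cards2 ?nab.
by rewrite -(cards1 (1 : {perm T})%g) subset_leq_card.
Qed.

Lemma pair_stab_trans_or_trivial :
  [transitive^2 N, on ~: L | 'P] -> [transitive H, on ~: L | 'P] \/ H = 1%g.
Proof.
move=> tr2N; have [fixH | /subsetPn[h Hh nCh]] := boolP (H \subset 'C(~: L | 'P)).
  right; apply/trivgP; have := perm_faithful H.
  rewrite /faithful (setIidPl _) // -(setUCr L) astabU subsetI fixH andbT.
  by rewrite pair_stabE subsetIr.
have [x Lx hx] : exists2 x, x \in ~: L & h x != x.
  case: (pickP [pred x in ~: L | h x != x]) => [x /andP[] | fixh]; first by exists x.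
  case/negP: nCh; apply/astabP => x Lx; apply/eqP.
  by move: (fixh x); rewrite /= Lx => /negbFE.
have Lhx : h x \in ~: L by rewrite (actsP acts_pair_stab_compl).
left; apply: (trans_norm_ntransitive2 tr2N norm_pair_stab acts_pair_stab_compl Lx Lhx).
  by rewrite eq_sym.
exact: mem_orbit.
Qed.

Lemma ntransitive2_compl_pair_card4 :
  4 <= #|T| -> [transitive^2 N, on ~: L | 'P] -> H = 1%g -> #|T| = 4.
Proof.
move=> geT4 tr2N H1.
have cardLc : #|~: L| = #|T| - 2 by rewrite -(cardsC L) cards2 nab addKn.
have [x [y [Lx Ly nxy]]] : exists x y, [/\ x \in ~: L, y \in ~: L & x != y].
  by apply/card_gt1P; rewrite cardLc; lia.
have : #|~: L| * (#|~: L| - 1) <= 2.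
  apply: leq_trans (card_norm_pair_trivial H1).
  by rewrite -(card_ntransitive2 tr2N Lx Ly nxy) leq_pmulr ?cardG_gt0.
by rewrite cardLc; nia.
Qed.

Lemma pair_stab_half_transitive s :
    N \subset 'C_G[s | 'P] ->
    [transitive 'C_G[s | 'P] :&: 'N(L | 'P), on ~: L :\ s | 'P] ->
  half_transitive H (~: [set a; b; s]).
Proof.
move=> sNGs trNs; rewrite setCU -setDE; split.
  apply: actsD acts_pair_stab_compl _.
  apply: subset_trans (subset_trans pair_stab_sub_norm sNGs) _.
  exact: subset_trans (subsetIr _ _) (astab_sub _ _).
move=> x y Sx Sy; apply: card_orbit_trans_norm trNs _ Sx Sy.
by rewrite (subset_trans _ norm_pair_stab) // setSI ?subsetIl.
Qed.

End PointPair.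

Section LinearSpace.

Variables (T : finType) (lines : {set {set T}}) (G : {group {perm T}}).
Hypotheses (linT : linear_space lines) (autG : automorphisms lines G).
Hypothesis tr2G : [transitive^2 G, on [set: T] | 'P].

Lemma line_two_points L : L \in lines -> exists a b, [/\ a \in L, b \in L & a != b].
Proof. by move=> lineL; apply/card_gt1P; apply: linT.1. Qed.

Lemma line_eq L1 L2 x y :
    L1 \in lines -> L2 \in lines -> x != y ->
    x \in L1 -> y \in L1 -> x \in L2 -> y \in L2 ->
  L1 = L2.
Proof.
move=> line1 line2 nxy x1 y1 x2 y2.
have /card_le1_eqP : #|[set L in lines | (x \in L) && (y \in L)]| <= 1 by rewrite linT.2.
by apply; rewrite inE ?line1 ?line2 ?x1 ?y1 ?x2 ?y2.
Qed.

Lemma line_astabs L g x y :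
    L \in lines -> g \in G -> x != y -> x \in L -> y \in L -> g x \in L -> g y \in L ->
  g \in 'N(L | 'P).
Proof.
move=> lineL Gg nxy xL yL gxL gyL.
have lineLg : setact 'P L g \in lines by rewrite (actsP autG).
rewrite -astab1_set; apply/astab1P.
apply: (line_eq lineLg lineL (x := g x) (y := g y)) => //.
- by rewrite (inj_eq perm_inj).
- exact: (mem_setact 'P g xL).
- exact: (mem_setact 'P g yL).
Qed.

Lemma line_norm_pair L a b x y :
    L \in lines -> a \in L -> b \in L -> x \in L -> y \in L -> a != b -> x != y ->
  exists2 g, g \in 'N_G(L | 'P) & g a = x /\ g b = y.
Proof.
move=> lineL aL bL xL yL nab nxy.
have [g Gg [/= /[!apermE] ga gb]] :=
  ntransitive2P tr2G (in_setT a) (in_setT b) (in_setT x) (in_setT y) nab nxy.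
exists g => //; apply/setIP; split=> //.
by apply: (line_astabs lineL Gg nab aL bL); rewrite ?ga ?gb.
Qed.

Section Line.

Variables (L : {set T}) (a b : T).
Hypotheses (lineL : L \in lines) (aL : a \in L) (bL : b \in L) (nab : a != b).

Local Notation N := 'N_G(L | 'P).

Lemma orbit_line_norm : orbit 'P N a = L.
Proof.
apply/eqP; rewrite eqEsubset acts_sub_orbit ?subsetIr // aL /=.
apply/subsetP=> x xL; have [-> | xa] := eqVneq x a; first exact: orbit_refl.
have [g Ng [gx _]] := line_norm_pair lineL aL bL xL aL nab xa.
by apply/orbitP; exists g.
Qed.

Lemma orbit_line_norm_stab : orbit 'P 'C_N[a | 'P] b = L :\ a.
Proof.
have actsNa : [acts 'C_N[a | 'P], on L :\ a | 'P].
  apply: actsD; first exact: subset_trans (subsetIl _ _) (subsetIr _ _).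
  exact: subset_trans (subsetIr _ _) (astab_sub _ _).
apply/eqP; rewrite eqEsubset acts_sub_orbit // !inE eq_sym nab bL /=.
apply/subsetP=> y /setD1P[ya yL]; rewrite eq_sym in ya.
have [g Ng [ga gb]] := line_norm_pair lineL aL bL aL yL nab ya.
by apply/orbitP; exists g => //; rewrite inE Ng; apply/astab1P.
Qed.

Lemma line_norm_two_point_stab :
  'C_N[a | 'P] :&: 'C_N[b | 'P] = 'C_G[a | 'P] :&: 'C_G[b | 'P].
Proof.
apply/eqP; rewrite eqEsubset setISS ?setSI ?subsetIl //=.
apply/subsetP=> g /setIP[/setIP[Gg Ga] /setIP[_ Gb]].
have ga : g a = a := astab1P Ga.
have gb : g b = b := astab1P Gb.
have Ng : g \in N by rewrite inE Gg (line_astabs lineL Gg nab aL bL) ?ga ?gb.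
by apply/setIP; split; apply/setIP.
Qed.

Lemma card_line_norm :
  #|L| * (#|L| - 1) * #|'C_G[a | 'P] :&: 'C_G[b | 'P]| = #|N|.
Proof.
rewrite -line_norm_two_point_stab -(card_orbit2_stab 'P N a b).
by rewrite orbit_line_norm orbit_line_norm_stab (cardsD1 a L) aL add1n subn1.
Qed.

End Line.

Lemma line_norm_sub_stab_dvdn L s :
    L \in lines -> 'N_G(L | 'P) \subset 'C_G[s | 'P] ->
  #|L| * (#|L| - 1) %| #|T| - 1.
Proof.
move=> lineL sNGs; have [a [b [aL bL nab]]] := line_two_points lineL.
have trG := ntransitive1 (ltn0Sn 1) tr2G.
have cardGs : #|'C_G[s | 'P]| = (#|T| - 1) * #|'C_G[a | 'P] :&: 'C_G[b | 'P]|.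
  have T_gt0 : 0 < #|T| by apply/card_gt0P; exists a.
  apply/eqP; rewrite -(eqn_pmul2l T_gt0) mulnA -(cardsT T).
  by rewrite card_atrans_stab ?inE // card_ntransitive2 ?inE.
have := cardSg sNGs; rewrite -(card_line_norm lineL aL bL nab) cardGs.
by rewrite dvdn_pmul2r ?cardG_gt0.
Qed.

Lemma line_norm_ntransitive2_or_sub_stab L s :
    L \in lines -> s \notin L ->
    [transitive 'C_G[s | 'P] :&: 'N(L | 'P), on ~: L :\ s | 'P] ->
  [transitive^2 'N_G(L | 'P), on ~: L | 'P]
  \/ ('N_G(L | 'P) \subset 'C_G[s | 'P] /\ #|L| * (#|L| - 1) %| #|T| - 1).
Proof.
move=> lineL sL trNs.
have [sNGs | nsNGs] := boolP ('N_G(L | 'P) \subset 'C_G[s | 'P]).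
  by right; split=> //; apply: line_norm_sub_stab_dvdn sNGs.
left; apply: (stab_trans_ntransitive2 (x := s)); rewrite ?inE //.
- by rewrite astabsC subsetIr.
- by rewrite setIAC.
- by apply: contra nsNGs; rewrite subsetI subsetIl.
Qed.

End LinearSpace.

Lemma feasible_stab_trans (T : finType) (G : {group {perm T}}) s (L : {set T}) :
    feasible G (flag_orbit G s (~: L)) ->
  [transitive 'C_G[s | 'P] :&: 'N(L | 'P), on ~: L :\ s | 'P].
Proof.
case=> _ /(_ (s, ~: L)); rewrite astabsC; apply.
by apply/imsetP; exists 1%g; rewrite ?group1 //= act1 (act1 'P^*).
Qed.

Theorem lemma3p2 (T : finType) (lines : {set {set T}}) (G : {group {perm T}})
    (s : T) (L : {set T}) :
  linear_space lines ->
  automorphisms lines G ->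
  [transitive^2 G, on [set: T] | 'P] ->
  4 <= #|T| ->
  L \in lines -> s \notin L ->
  feasible G (flag_orbit G s (~: L)) ->
  ([transitive^2 'N_G(L | 'P), on ~: L | 'P]
   \/ ('N_G(L | 'P) \subset 'C_G[s | 'P] /\ (#|L| * (#|L| - 1) %| #|T| - 1)%N))
  /\
  (forall a b : T, L = [set a; b] ->
     (#|T| = 4 /\ G :=: Alt T)
     \/ [transitive 'C_G[a | 'P] :&: 'C_G[b | 'P], on ~: [set a; b] | 'P]
     \/ (odd #|T| /\ 'C_G[a | 'P] :&: 'C_G[b | 'P] \subset 'C_G[s | 'P]
         /\ half_transitive ('C_G[a | 'P] :&: 'C_G[b | 'P]) (~: [set a; b; s]))).
Proof.
move=> linT autG tr2G geT4 lineL sL feas.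
have trNs := feasible_stab_trans feas.
have part1 := line_norm_ntransitive2_or_sub_stab linT autG tr2G lineL sL trNs.
split=> // a b defL; subst L.
have nab : a != b by have := linT.1 _ lineL; rewrite cards2 ltnS lt0b.
case: part1 => [tr2N | [sNGs dvdT]].
  have [trH | H1] := pair_stab_trans_or_trivial tr2N; [by right; left | left].
  have cardT := ntransitive2_compl_pair_card4 nab geT4 tr2N H1.
  by split=> //; apply: sharply_ntransitive2_Alt4 cardT tr2G nab H1.
right; right; split; last split.
- by move: dvdT; rewrite cards2 nab dvdn2 oddB ?(leq_trans _ geT4) //= addbT negbK.
- exact: subset_trans (pair_stab_sub_norm _ _ _) sNGs.
- exact: pair_stab_half_transitive.
Qed.
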